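(* For every integer $n\ge 3$, $$\gamma_t(C_n\times C_4)=\gamma_p(C_n\times C_4)=\begin{cases} n, & \text{if } n\equiv 0 \pmod 4,\\ n+1, & \text{if } n\equiv 1,3 \pmod 4,\\ n+2, & \text{if } n\equiv 2\pmod 4.\end{cases}$$
   Context: All graphs are finite, simple and undirected. $C_n$ denotes the cycle of order $n$ and $G\times H$ the Cartesian product of graphs. For a graph $G$ without isolated vertices: a set $D\subseteq V(G)$ is a total dominating set if every vertex of $G$ (including those in $D$) has a neighbour in $D$; $\gamma_t(G)$ is the minimum size of a total dominating set. A set $D\subseteq V(G)$ is a paired dominating set if every vertex outside $D$ has a neighbour in $D$ and the induced subgraph $G[D]$ has a perfect matching; $\gamma_p(G)$ is the minimum size of a paired dominating set. *)

From mathcomp Require Import all_boot.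
Set Implicit Arguments. Unset Strict Implicit. Unset Printing Implicit Defensive.

(* cycle C_n on 'I_n : i ~ j iff j = i+1 mod n or i = j+1 mod n (simple for n >= 3) *)
Definition cycle_adj (n : nat) : rel 'I_n :=
  fun i j => (j == (i.+1 %% n) :> nat) || (i == (j.+1 %% n) :> nat).

Definition cart_adj (T U : finType) (e : rel T) (f : rel U) : rel (T * U) :=
  fun x y => ((x.1 == y.1) && f x.2 y.2) || ((x.2 == y.2) && e x.1 y.1).

Definition total_dominating (T : finType) (e : rel T) (D : {set T}) : Prop :=
  forall v : T, exists2 u, u \in D & e v u.

(* G[D] has a perfect matching: a fixed-point-free involution of D along edges *)
Definition has_perfect_matching (T : finType) (e : rel T) (D : {set T}) : Prop :=
  exists m : T -> T, forall x, x \in D ->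
    [/\ m x \in D, e x (m x) & m (m x) = x].

Definition paired_dominating (T : finType) (e : rel T) (D : {set T}) : Prop :=
  (forall v : T, v \notin D -> exists2 u, u \in D & e v u) /\
  has_perfect_matching e D.

Definition is_min_card (T : finType) (P : {set T} -> Prop) (k : nat) : Prop :=
  (exists D, P D /\ #|D| = k) /\ (forall D, P D -> k <= #|D|).

Definition CnC4_adj (n : nat) : rel ('I_n * 'I_4) :=
  cart_adj (@cycle_adj n) (@cycle_adj 4).

Definition gamma_value (n : nat) : nat :=
  if n %% 4 == 0 then n else if n %% 4 == 2 then n + 2 else n + 1.

(* Encode a vertex set D of C_n x C_4 column by column as 4-bit numbers.  D is
   totally dominating iff every three cyclically consecutive columns a, b, c
   dominate the middle one, and then |a| + 2|b| + |c| >= 4.  Summing over the n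
   triples counts every column four times, so |D| = n + E/4 where E >= 0 is the
   total excess of the triples.  The lower bound thus says E >= 4 when 4 does
   not divide n, and E >= 8 when n = 2 (mod 4).  This is a property of closed
   walks of length n in a finite automaton on pairs of columns, checked by
   computing, for every starting pair, the states (pair, length mod 4,
   excess < 8) reachable from it.  The bound is attained by repeating the
   columns {}, {0,1}, {}, {2,3} with a suitable last column; pairing 0 with 1
   and 2 with 3 inside each column shows the set is paired dominating. *)

From mathcomp Require Import all_boot zify zmodp.
Set Implicit Arguments. Unset Strict Implicit. Unset Printing Implicit Defensive.

(** * Columns as 4-bit numbers *)

Definition bit (c j : nat) : bool := odd (c %/ 2 ^ j).

Definition weight (c : nat) : nat := bit c 0 + bit c 1 + bit c 2 + bit c 3.

(* [a], [b], [c] encode three consecutive columns, and vertex [j] of the middle one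
   has a neighbour among them. *)
Definition dominated (a b c j : nat) : bool :=
  [|| bit b (j.+1 %% 4), bit b ((j + 3) %% 4), bit a j | bit c j].

Definition covers (a b c : nat) : bool := all (dominated a b c) (iota 0 4).

Definition excess (a b c : nat) : nat := weight a + 2 * weight b + weight c - 4.

Lemma all_iotaP (P : pred nat) n i : all P (iota 0 n) -> i < n -> P i.
Proof. by move=> /allP allP_ lt_in; apply: allP_; rewrite mem_iota. Qed.

Lemma covers_weight a b c : a < 16 -> b < 16 -> c < 16 -> covers a b c ->
  4 <= weight a + 2 * weight b + weight c.
Proof.
have weight_ok : all (fun a => all (fun b => all (fun c =>
    covers a b c ==> (4 <= weight a + 2 * weight b + weight c))
  (iota 0 16)) (iota 0 16)) (iota 0 16) by vm_compute.
move=> lt_a lt_b lt_c; apply/implyP.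
exact: all_iotaP (all_iotaP (all_iotaP weight_ok lt_a) lt_b) lt_c.
Qed.

Definition code (g : nat -> bool) : nat := g 0 + 2 * g 1 + 4 * g 2 + 8 * g 3.

Lemma bit_code g j : j < 4 -> bit (code g) j = g j.
Proof.
by case: j => [|[|[|[|j]]]] // _; rewrite /code;
  case: (g 0); case: (g 1); case: (g 2); case: (g 3).
Qed.

Lemma code_lt16 g : code g < 16.
Proof. by rewrite /code; case: (g 0); case: (g 1); case: (g 2); case: (g 3). Qed.

Lemma code_bit c : c < 16 -> code (bit c) = c.
Proof.
by move=> lt_c; apply/eqP; apply: (all_iotaP (P := fun c => code (bit c) == c)) lt_c.
Qed.

(** * The excess automaton *)

Definition steps (a b : nat) : seq (nat * nat) :=
  [seq (c, excess a b c) | c <- iota 0 16 & covers a b c].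

Definition step_table : seq (seq (seq (nat * nat))) :=
  [seq [seq steps a b | b <- iota 0 16] | a <- iota 0 16].

Definition steps_at (a b : nat) : seq (nat * nat) := nth [::] (nth [::] step_table a) b.

(* [(a, b, r, x)]: the last two columns, the walk length mod 4 and the excess so far;
   walks are dropped once their excess reaches 8, as they already meet the bound. *)
Definition state := (nat * nat * nat * nat)%type.

Definition table := seq (seq (seq (seq bool))).

Definition marked (t : table) (s : state) : bool :=
  let: (a, b, r, x) := s in nth false (nth [::] (nth [::] (nth [::] t a) b) r) x.

Definition mark (t : table) (s : state) : table :=
  let: (a, b, r, x) := s in
  let ta := nth [::] t a in let tb := nth [::] ta b in let tr := nth [::] tb r in
  set_nth [::] t a (set_nth [::] ta b (set_nth [::] tb r (set_nth false tr x true))).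

Definition empty_table : table := nseq 16 (nseq 16 (nseq 4 (nseq 8 false))).

Definition successors (s : state) : seq state :=
  let: (a, b, r, x) := s in
  [seq (b, p.1, r.+1 %% 4, x + p.2) | p <- steps_at a b & x + p.2 < 8].

Fixpoint explore (fuel : nat) (t : table) (todo : seq state) : table :=
  if fuel is fuel'.+1 then
    if todo is s :: todo' then
      let new := [seq s' <- successors s | ~~ marked t s'] in
      explore fuel' (foldl mark t new) (new ++ todo')
    else t
  else t.

Definition table_closed (t : table) : bool :=
  all (fun a => all (fun b => all (fun r => all (fun x =>
    marked t (a, b, r, x) ==> all (marked t) (successors (a, b, r, x)))
  (iota 0 8)) (iota 0 4)) (iota 0 16)) (iota 0 16).

(* A closed walk of length n ending in one of these states would have too small an
   excess for [gamma_value n]. *)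
Definition avoids_bad_ends (t : table) (a b : nat) : bool :=
  [&& ~~ marked t (a, b, 1, 0), ~~ marked t (a, b, 2, 0), ~~ marked t (a, b, 3, 0)
    & ~~ marked t (a, b, 2, 4)].

(* Only the checked properties of the table matter, so the search [explore] needs no
   correctness proof and its fuel is arbitrary. *)
Definition certified (a b : nat) : bool :=
  let t := explore 2000 (mark empty_table (a, b, 0, 0)) [:: (a, b, 0, 0)] in
  [&& marked t (a, b, 0, 0), table_closed t & avoids_bad_ends t a b].

Lemma certified_all : all (fun a => all (certified a) (iota 0 16)) (iota 0 16).
Proof. by vm_compute. Qed.

Lemma mem_steps_at a b c : a < 16 -> b < 16 -> c < 16 -> covers a b c ->
  (c, excess a b c) \in steps_at a b.
Proof.
move=> lt_a lt_b lt_c cov; rewrite /steps_at /step_table.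
rewrite (nth_map 0) ?size_iota // nth_iota // (nth_map 0) ?size_iota // nth_iota //.
by apply: map_f; rewrite mem_filter cov mem_iota.
Qed.

Lemma mem_successors a b c r x : a < 16 -> b < 16 -> c < 16 -> covers a b c ->
  x + excess a b c < 8 ->
  (b, c, r.+1 %% 4, x + excess a b c) \in successors (a, b, r, x).
Proof.
move=> lt_a lt_b lt_c cov lt8; apply/mapP; exists (c, excess a b c) => //.
by rewrite mem_filter lt8 mem_steps_at.
Qed.

Lemma certifiedP a b : certified a b ->
  exists t, [/\ marked t (a, b, 0, 0), table_closed t & avoids_bad_ends t a b].
Proof. by move=> ok; eexists; apply/and3P; exact: ok. Qed.

Lemma table_closedP t a b r x : table_closed t -> a < 16 -> b < 16 -> r < 4 -> x < 8 ->
  marked t (a, b, r, x) -> all (marked t) (successors (a, b, r, x)).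
Proof.
move=> cl lt_a lt_b lt_r lt_x; apply/implyP.
exact: all_iotaP (all_iotaP (all_iotaP (all_iotaP cl lt_a) lt_b) lt_r) lt_x.
Qed.

Lemma modnS_mod m d : (m %% d).+1 %% d = m.+1 %% d.
Proof. by rewrite -addn1 modnDml addn1. Qed.

Lemma sum_shift_periodic (g : nat -> nat) n : (forall k, g (k + n) = g k) ->
  \sum_(k < n) g k.+1 = \sum_(k < n) g k.
Proof.
case: n => [|n] g_per; first by rewrite !big_ord0.
have g_last : g n.+1 = g 0 by rewrite -[n.+1]/(0 + n.+1) g_per.
apply/eqP; rewrite -(eqn_add2l (g 0)); apply/eqP.
transitivity (\sum_(k < n.+2) g k); first by rewrite [RHS]big_ord_recl.
by rewrite [LHS]big_ord_recr /= g_last addnC.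
Qed.

Section ClosedWalk.

Variables (n : nat) (f : nat -> nat).
Hypotheses (f_lt : forall k, f k < 16) (f_periodic : forall k, f (k + n) = f k)
  (f_covers : forall k, covers (f k) (f k.+1) (f k.+2)).

Let walk_excess j := \sum_(k < j) excess (f k) (f k.+1) (f k.+2).

Lemma weight_sum_excess : 4 * \sum_(k < n) weight (f k) = 4 * n + walk_excess n.
Proof.
have per k : weight (f (k + n)) = weight (f k) by rewrite f_periodic.
have per1 k : weight (f (k + n).+1) = weight (f k.+1) by rewrite -addSn f_periodic.
have shift1 := sum_shift_periodic per.
have shift2 := sum_shift_periodic per1.
transitivity (\sum_(k < n) (weight (f k) + 2 * weight (f k.+1) + weight (f k.+2))).
  rewrite [RHS]big_split [in RHS]big_split /= -big_distrr /= shift2 shift1.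
  by set W := \sum_(k < n) weight (f k); lia.
have -> : 4 * n = \sum_(k < n) 4 by rewrite sum_nat_const card_ord mulnC.
rewrite -big_split /=.
apply: eq_bigr => k _; rewrite /excess subnKC //.
exact: covers_weight.
Qed.

Lemma walk_marked t : table_closed t -> marked t (f 0, f 1, 0, 0) ->
  forall j, walk_excess j < 8 -> marked t (f j, f j.+1, j %% 4, walk_excess j).
Proof.
move=> cl start; elim=> [|j IH]; first by rewrite /walk_excess big_ord0.
have excessS : walk_excess j.+1 = walk_excess j + excess (f j) (f j.+1) (f j.+2).
  by rewrite /walk_excess big_ord_recr.
rewrite excessS => lt8.
have lt8' : walk_excess j < 8 by lia.
have succ_marked :=
  table_closedP cl (f_lt j) (f_lt j.+1) (ltn_pmod j (isT : 0 < 4)) lt8' (IH lt8').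
apply: (allP succ_marked); rewrite -modnS_mod.
exact: mem_successors.
Qed.

Lemma gamma_value_le_walk_weight : gamma_value n <= \sum_(k < n) weight (f k).
Proof.
have [t [start cl /and4P[bad1 bad2 bad3 bad4]]] :=
  certifiedP (all_iotaP (all_iotaP certified_all (f_lt 0)) (f_lt 1)).
have sum_eq := weight_sum_excess.
set e := walk_excess n in sum_eq *; set w := \sum_(k < n) weight (f k) in sum_eq *.
have [ge8 | lt8] := leqP 8 e; first by rewrite /gamma_value; repeat case: ifP => _; lia.
have := walk_marked cl start lt8.
rewrite -[f n]/(f (0 + n)) -[f n.+1]/(f (1 + n)) !f_periodic -/e => end_marked.
have [e0 | e4] : e = 0 \/ e = 4 by lia.
- have r0 : n %% 4 = 0.
    move: (ltn_pmod n (isT : 0 < 4)) end_marked bad1 bad2 bad3; rewrite e0.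
    by case: (n %% 4) => [|[|[|[|r]]]] // _ end0; rewrite end0.
  by rewrite /gamma_value r0 /=; lia.
- rewrite e4 in end_marked.
  have r_ne2 : n %% 4 != 2 by apply: contraNneq bad4 => r2; rewrite r2 in end_marked.
  by rewrite /gamma_value (negbTE r_ne2); case: ifP; lia.
Qed.

End ClosedWalk.

(** * Columns of a vertex set *)

Lemma paired_total_dominating (T : finType) (e : rel T) (D : {set T}) :
  paired_dominating e D -> total_dominating e D.
Proof.
move=> [dom [mate mateP]] v; have [vD | /dom//] := boolP (v \in D).
by have [mate_vD adj_v _] := mateP v vD; exists (mate v).
Qed.

Lemma cycle_adjE n (i u : 'I_n) : cycle_adj i u = (u == ordS i) || (u == ord_pred i).
Proof. by rewrite /cycle_adj -(can2_eq (@ordSK n) (@ord_predK n)) [ordS u == i]eq_sym. Qed.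

Definition nbhd n (v : 'I_n * 'I_4) : seq ('I_n * 'I_4) :=
  [:: (v.1, ordS v.2); (v.1, ord_pred v.2); (ord_pred v.1, v.2); (ordS v.1, v.2)].

Lemma CnC4_adjE n (v u : 'I_n * 'I_4) : CnC4_adj v u = (u \in nbhd v).
Proof.
case: v u => [i j] [u1 u2]; rewrite /CnC4_adj /cart_adj /= !cycle_adjE !inE !xpair_eqE.
rewrite [i == u1]eq_sym [j == u2]eq_sym.
by case: (u1 == i); case: (u2 == j); case: (u2 == ordS j); case: (u2 == ord_pred j);
  case: (u1 == ordS i); case: (u1 == ord_pred i).
Qed.

Lemma total_dominatingP n (D : {set 'I_n * 'I_4}) :
  total_dominating (@CnC4_adj n) D <-> forall v, has (mem D) (nbhd v).
Proof.
split=> [dom v | dom v].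
  by have [u uD] := dom v; rewrite CnC4_adjE => u_nbhd; apply/hasP; exists u.
by have /hasP[u u_nbhd uD] := dom v; exists u; rewrite ?CnC4_adjE.
Qed.

Definition column n (D : {set 'I_n * 'I_4}) (i : 'I_n) : nat :=
  code (fun j => (i, inord j) \in D).

Lemma bit_column n (D : {set 'I_n * 'I_4}) i (j : 'I_4) : bit (column D i) j = ((i, j) \in D).
Proof. by rewrite bit_code ?ltn_ord ?inord_val. Qed.

Lemma has_nbhd_column n (D : {set 'I_n * 'I_4}) (v : 'I_n * 'I_4) :
  has (mem D) (nbhd v) =
  dominated (column D (ord_pred v.1)) (column D v.1) (column D (ordS v.1)) v.2.
Proof.
case: v => i j; have predE : nat_of_ord (ord_pred j) = (j + 3) %% 4 by rewrite /= addnS.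
by rewrite /= -!bit_column predE orbF.
Qed.

Section ColumnSequence.

Variable m : nat.
Local Notation n := m.+1.
Variable D : {set 'I_n * 'I_4}.

Definition column_at (k : nat) : nat := column D (inZp k).

Lemma ordS_inZp k : ordS (inZp k : 'I_n) = inZp k.+1.
Proof. by apply: val_inj; rewrite /= modnS_mod. Qed.

Lemma ord_pred_inZp k : ord_pred (inZp k.+1 : 'I_n) = inZp k.
Proof. by rewrite -ordS_inZp ordSK. Qed.

Lemma column_at_lt16 k : column_at k < 16.
Proof. exact: code_lt16. Qed.

Lemma column_at_periodic k : column_at (k + n) = column_at k.
Proof. by rewrite /column_at; congr column; apply: val_inj; rewrite /= modnDr. Qed.

Lemma card_column_at : #|D| = \sum_(k < n) weight (column_at k).
Proof.
transitivity (\sum_(i < n) \sum_(j < 4) ((i, j) \in D : nat)).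
  by rewrite pair_bigA /= -sum1_card big_mkcond /=; apply: eq_bigr => -[i j].
apply: eq_bigr => i _; rewrite /column_at valZpK.
by rewrite !big_ord_recr big_ord0 /= -!bit_column.
Qed.

Lemma total_dominating_column_at : total_dominating (@CnC4_adj n) D <->
  forall k, covers (column_at k) (column_at k.+1) (column_at k.+2).
Proof.
rewrite total_dominatingP; split=> [dom k | cov [i j]].
  apply/allP => j; rewrite mem_iota => lt_j.
  have := dom (inZp k.+1, inord j).
  by rewrite has_nbhd_column /= ord_pred_inZp ordS_inZp inordK.
have i_eq : inZp (i + m).+1 = i.
  by apply: val_inj; rewrite /= -addnS modnDr modn_small.
have := allP (cov (i + m)) j; rewrite mem_iota ltn_ord => /(_ isT).
rewrite /column_at -(ordS_inZp (i + m).+1) -(ord_pred_inZp (i + m)) i_eq.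
by rewrite has_nbhd_column.
Qed.

End ColumnSequence.

(** * The extremal sets *)

(* The columns {}, {0,1}, {}, {2,3} repeated, ending with {2,3}, or with all of C_4
   when n = 2 (mod 4). *)
Definition pattern_column (i : nat) : nat := nth 0 [:: 0; 3; 0; 12] (i %% 4).

Definition last_column (n : nat) : nat := if n %% 4 == 2 then 15 else 12.

Definition pattern (n i : nat) : nat := if i.+1 == n then last_column n else pattern_column i.

Definition pattern_set (n : nat) : {set 'I_n * 'I_4} :=
  [set v : 'I_n * 'I_4 | bit (pattern n v.1) v.2].

Lemma pattern_mem n i : pattern n i \in [:: 0; 3; 12; 15].
Proof.
rewrite /pattern /last_column /pattern_column; case: ifP => _; first by case: ifP.
by case: (i %% 4) (ltn_pmod i (isT : 0 < 4)) => [|[|[|[|r]]]].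
Qed.

Lemma pattern_lt16 n i : pattern n i < 16.
Proof. by have := pattern_mem n i; rewrite !inE => /or4P[] /eqP->. Qed.

Lemma column_pattern_set n (i : 'I_n) : column (pattern_set n) i = pattern n i.
Proof.
transitivity (code (bit (pattern n i))); last exact/code_bit/pattern_lt16.
by rewrite /column /code !inE /= !inordK.
Qed.

Lemma covers_pattern_columns i :
  covers (pattern_column i) (pattern_column i.+1) (pattern_column i.+2).
Proof.
rewrite /pattern_column -[i.+2]addn2 -[i.+1]addn1 -!(modnDml i).
by case: (i %% 4) (ltn_pmod i (isT : 0 < 4)) => [|[|[|[|r]]]].
Qed.

Lemma covers_pattern_columns_last i :
  covers (pattern_column i) (pattern_column i.+1) (last_column i.+3).
Proof.
rewrite /pattern_column /last_column -[i.+3]addn3 -[i.+1]addn1 -!(modnDml i).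
by case: (i %% 4) (ltn_pmod i (isT : 0 < 4)) => [|[|[|[|r]]]].
Qed.

Lemma covers_pattern_wrap i :
  covers (pattern_column i) (last_column i.+2) (pattern_column 0).
Proof.
rewrite /pattern_column /last_column -[i.+2]addn2 -(modnDml i).
by case: (i %% 4) (ltn_pmod i (isT : 0 < 4)) => [|[|[|[|r]]]].
Qed.

Lemma covers_last_column n : covers (last_column n) (pattern_column 0) (pattern_column 1).
Proof. by rewrite /last_column; case: ifP. Qed.

Lemma weight_pattern_column i : weight (pattern_column i) = (odd i).*2.
Proof.
rewrite /pattern_column -(odd_mod i (erefl : odd 4 = false)).
by case: (i %% 4) (ltn_pmod i (isT : 0 < 4)) => [|[|[|[|r]]]].
Qed.

Lemma sum_weight_pattern_column j : \sum_(k < j) weight (pattern_column k) = (j./2).*2.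
Proof.
elim: j => [|j IH]; first by rewrite big_ord0.
by rewrite big_ord_recr /= IH weight_pattern_column -doubleD addnC -uphalf_half.
Qed.

Definition partner (j : 'I_4) : 'I_4 := if odd j then ord_pred j else ordS j.

Lemma partnerK : involutive partner.
Proof. by case=> [[|[|[|[|j]]]] lt_j] //; apply: val_inj. Qed.

Lemma pattern_set_partner n (i : 'I_n) j :
  (i, j) \in pattern_set n -> (i, partner j) \in pattern_set n.
Proof.
rewrite !inE /=; have := pattern_mem n i; rewrite !inE => /or4P[] /eqP->;
  by case: j => [[|[|[|[|j]]]] lt_j].
Qed.

Lemma pattern_set_matching n : has_perfect_matching (@CnC4_adj n) (pattern_set n).
Proof.
exists (fun v => (v.1, partner v.2)) => -[i j] ij_in; split => /=.
- exact: pattern_set_partner.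
- by rewrite CnC4_adjE /partner !inE; case: (odd j); rewrite eqxx ?orbT.
- by rewrite partnerK.
Qed.

Section PatternSet.

Variable m : nat.
Hypothesis m_ge2 : 2 <= m.
Local Notation n := m.+1.

Lemma column_at_pattern_set k : column_at (pattern_set n) k = pattern n (k %% n).
Proof. exact: column_pattern_set. Qed.

Lemma pattern_set_total : total_dominating (@CnC4_adj n) (pattern_set n).
Proof.
apply/total_dominating_column_at => k; rewrite !column_at_pattern_set.
rewrite -[k.+2]addn2 -[k.+1]addn1 -!(modnDml k) !(addn1, addn2).
move: (k %% n) (ltn_pmod k (ltn0Sn m)) => a lt_a; rewrite /pattern.
have [lt_a2 | gt_a2 | a2_n] := ltngtP a.+2 n.
- rewrite !modn_small // ?(ltnW lt_a2) // (ltn_eqF (ltnW lt_a2)) (ltn_eqF lt_a2).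
  have [a3_n | a3_ne] := eqVneq a.+3 n.
    by rewrite -a3_n; exact: covers_pattern_columns_last.
  exact: covers_pattern_columns.
- have -> : a = m by lia.
  have -> : m.+2 %% n = 1 by rewrite -[m.+2]/(1 + n) modnDr modn_small //; lia.
  rewrite eqxx modnn !ltn_eqF ?ltnS ?(ltnW m_ge2) //; exact: covers_last_column.
- have a1_lt : a.+1 < n by rewrite -a2_n.
  rewrite (modn_small a1_lt) -a2_n modnn (ltn_eqF (ltnSn a.+1)) eqxx ltn_eqF //.
  exact: covers_pattern_wrap.
Qed.

Lemma card_pattern_set : #|pattern_set n| = gamma_value n.
Proof.
rewrite card_column_at big_ord_recr column_at_pattern_set modn_small // /pattern eqxx.
rewrite (eq_bigr (fun k : 'I_m => weight (pattern_column k))); last first.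
  move=> k _; have lt_k : k < n := leqW (ltn_ord k).
  by rewrite column_at_pattern_set /= (modn_small lt_k) /pattern ltn_eqF // ltnS.
have [w15 w12] : weight 15 = 4 /\ weight 12 = 2 by [].
rewrite sum_weight_pattern_column /= /last_column /gamma_value -divn2 -mul2n.
by case: ifP => /eqP; case: ifP => /eqP; rewrite ?w15 ?w12; lia.
Qed.

Lemma pattern_set_paired : paired_dominating (@CnC4_adj n) (pattern_set n).
Proof.
split; last exact: pattern_set_matching.
by move=> v _; apply: pattern_set_total.
Qed.

End PatternSet.

Theorem theorem4p1 (n : nat) : 3 <= n ->
  is_min_card (total_dominating (@CnC4_adj n)) (gamma_value n) /\
  is_min_card (paired_dominating (@CnC4_adj n)) (gamma_value n).
Proof.
case: n => [//|m] m_ge2.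
have lower D : total_dominating (@CnC4_adj m.+1) D -> gamma_value m.+1 <= #|D|.
  move=> /total_dominating_column_at cov; rewrite card_column_at.
  exact: gamma_value_le_walk_weight (column_at_lt16 D) (column_at_periodic D) cov.
have paired := pattern_set_paired m_ge2.
have card := card_pattern_set m_ge2.
split; split=> [|D].
- by exists (pattern_set m.+1); split; first exact: paired_total_dominating.
- exact: lower.
- by exists (pattern_set m.+1).
- by move=> /paired_total_dominating; apply: lower.
Qed.
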